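(* Let $\Omega\subset\mathbb{R}^n$, let $k$ be a kernel on $\Omega$ satisfying the standing assumptions in the context, and let $u\in H_k(\Omega)$. Apply the gradient Hermite–Birkhoff $f$-greedy algorithm (described in the context) to $u$ with index set $\mathcal J:=\{1,\dots,n\}$, producing selected pairs $(x_1,\ell_1),(x_2,\ell_2),\dots$ and errors $e_0,e_1,\dots$. Then, for every $m\ge 1$, \[ \min_{m+1\le i\le 2m}\ \|\nabla e_i\|_{L^\infty(\Omega)} \ \le\ \sqrt{n}\, m^{-1/2}\, \|e_{m+1}\|_{H_k(\Omega)} \left[\ \prod_{i=m+1}^{2m} P_i(x_{i+1},\ell_{i+1})\ \right]^{1/m}. \]
   Context: $k:\Omega\times\Omega\to\mathbb{R}$ is a symmetric positive definite kernel with reproducing kernel Hilbert space $H_k(\Omega)$, $k\in C^2(\Omega\times\Omega)$, and for every $x\in\Omega$ and $\ell\in\mathcal J$ the function $\partial^{(2)}_\ell k(\cdot,x)$ (the $\ell$-th partial derivative of $k$ in its second argument) lies in $H_k(\Omega)$ and satisfies the derivative reproducing property $\partial_\ell f(x)=\langle f,\partial_\ell^{(2)}k(\cdot,x)\rangle_{H_k(\Omega)}$ for all $f\in H_k(\Omega)$. For a finite selection $\{(x_i,\ell_i)\}_{i=1}^m\subset\Omega\times\mathcal J$ let $V_m:=\operatorname{span}\{\partial^{(2)}_{\ell_i}k(\cdot,x_i): i=1,\dots,m\}$ ($V_0=\{0\}$), let $\Pi_m:H_k(\Omega)\to V_m$ be the orthogonal projector, $s_m:=\Pi_m u$ and $e_m:=u-s_m$.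 The $f$-greedy algorithm: starting from $m=0$ (so $s_0=0$), for each $m\ge 0$ choose $(x_{m+1},\ell_{m+1})\in\operatorname{argmax}_{x\in\Omega,\ \ell\in\mathcal J}|\partial_\ell e_m(x)|$ (a maximizer is assumed to exist) and set $s_{m+1}:=\Pi_{m+1}u$. The (derivative) power function is $P_m(x,\ell):=\|(I-\Pi_m)\partial^{(2)}_\ell k(\cdot,x)\|_{H_k(\Omega)}$ for $(x,\ell)\in\Omega\times\mathcal J$. Finally $\|\nabla e\|_{L^\infty(\Omega)}:=\sup_{x\in\Omega}\|\nabla e(x)\|_2$. *)

From HB Require Import structures.
From mathcomp Require Import all_boot all_order all_algebra.
From mathcomp Require Import all_classical all_reals all_analysis.
Set Implicit Arguments. Unset Strict Implicit. Unset Printing Implicit Defensive.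
Import Order.TTheory GRing.Theory Num.Theory.
Import numFieldNormedType.Exports.
Local Open Scope classical_set_scope.
Local Open Scope ring_scope.

Section Defs.
Variables (R : realType) (n : nat).
Notation pt := 'rV[R]_n.

(* l-th canonical basis vector of R^n (indices J = {1..n} are 'I_n, 0-based) *)
Definition evec (l : 'I_n) : pt := delta_mx 0 l.

Definition pd (f : pt -> R) (l : 'I_n) (x : pt) : R :=
  derive1 (fun t : R => f (x + t *: evec l)) 0.

Definition pd_exists (f : pt -> R) (l : 'I_n) (x : pt) : Prop :=
  derivable (fun t : R => f (x + t *: evec l)) 0 1.

(* Euclidean openness (via the equivalent sup-distance) *)
Definition open_set (Om : set pt) : Prop :=
  forall x, Om x -> exists2 r : R, 0 < r &
    forall y : pt, (forall i, `|y ord0 i - x ord0 i| < r) -> Om y.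

Definition cont2_on (Om : set pt) (g : pt -> pt -> R) : Prop :=
  forall x y, Om x -> Om y -> forall eps : R, 0 < eps ->
    exists2 del : R, 0 < del & forall x' y', Om x' -> Om y' ->
      (forall i, `|x' ord0 i - x ord0 i| < del) ->
      (forall i, `|y' ord0 i - y ord0 i| < del) ->
      `|g x' y' - g x y| < eps.

(* variable index of the 2n variables of (x,y): (false,l) = x_l, (true,l) = y_l *)
Definition pd2_exists (g : pt -> pt -> R) (a : bool * 'I_n) (x y : pt) : Prop :=
  if a.1 then pd_exists (g x) a.2 y else pd_exists (fun z => g z y) a.2 x.

Definition pd2 (g : pt -> pt -> R) (a : bool * 'I_n) : pt -> pt -> R :=
  fun x y => if a.1 then pd (g x) a.2 y else pd (fun z => g z y) a.2 x.

Definition C2_on (Om : set pt) (k : pt -> pt -> R) : Prop :=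
  cont2_on Om k /\
  (forall a, (forall x y, Om x -> Om y -> pd2_exists k a x y) /\
             cont2_on Om (pd2 k a)) /\
  (forall a b, (forall x y, Om x -> Om y -> pd2_exists (pd2 k a) b x y) /\
               cont2_on Om (pd2 (pd2 k a) b)).

Definition spd_kernel (Om : set pt) (k : pt -> pt -> R) : Prop :=
  (forall x y, Om x -> Om y -> k x y = k y x) /\
  (forall (N : nat) (xs : 'I_N -> pt) (c : 'I_N -> R),
     injective xs -> (forall i, Om (xs i)) -> (exists i, c i != 0) ->
     0 < \sum_(i < N) \sum_(j < N) c i * c j * k (xs i) (xs j)).

Variable H : lmodType R.

Definition hnorm (ip : H -> H -> R) (v : H) : R := Num.sqrt (ip v v).

(* H (with evaluation map ev and inner product ip) is the reproducing kernel
   Hilbert space H_k(Om) of k: a Hilbert space of functions on Om in which k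
   reproduces point evaluations (by Moore–Aronszajn this determines H_k(Om)). *)
Record is_RKHS (Om : set pt) (k : pt -> pt -> R) (ev : H -> pt -> R)
    (ip : H -> H -> R) : Prop := {
  ev_lin : forall (a : R) (f g : H) x, ev (a *: f + g) x = a * ev f x + ev g x;
  ev_inj : forall f : H, (forall x, Om x -> ev f x = 0) -> f = 0;
  ip_sym : forall f g, ip f g = ip g f;
  ip_linl : forall (a : R) (f g h : H), ip (a *: f + g) h = a * ip f h + ip g h;
  ip_pos : forall f : H, f != 0 -> 0 < ip f f;
  ip_complete : forall f : nat -> H,
    (forall eps : R, 0 < eps -> exists N, forall i j, (N <= i)%N -> (N <= j)%N ->
        hnorm ip (f i - f j) < eps) ->
    exists l : H, forall eps : R, 0 < eps -> exists N, forall i, (N <= i)%N ->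
        hnorm ip (f i - l) < eps;
  reproducing : forall x, Om x -> exists kx : H,
    (forall y, Om y -> ev kx y = k y x) /\ (forall f, ev f x = ip f kx)
}.

Definition deriv_reproducing (Om : set pt) (k : pt -> pt -> R)
    (ev : H -> pt -> R) (ip : H -> H -> R) (dk : pt -> 'I_n -> H) : Prop :=
  forall x l, Om x ->
    (forall y, Om y -> ev (dk x l) y = pd (k y) l x) /\
    (forall f, pd_exists (ev f) l x /\ pd (ev f) l x = ip f (dk x l)).

(* V_m = span{ dk x_i l_i : i = 1..m }, pts i = (x_i, l_i) for i >= 1 *)
Definition Vspace (dk : pt -> 'I_n -> H) (pts : nat -> pt * 'I_n) (m : nat)
  : set H :=
  [set w | exists c : 'I_m -> R,
     w = \sum_(i < m) c i *: dk (pts i.+1).1 (pts i.+1).2].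

Definition is_orth_proj (ip : H -> H -> R) (V : set H) (P : H -> H) : Prop :=
  forall v, V (P v) /\ forall w, V w -> ip (v - P v) w = 0.

Definition fgreedy (Om : set pt) (ev : H -> pt -> R) (u : H)
    (Pi : nat -> H -> H) (pts : nat -> pt * 'I_n) : Prop :=
  forall m, Om (pts m.+1).1 /\
    forall x l, Om x ->
      `|pd (ev (u - Pi m u)) l x| <=
      `|pd (ev (u - Pi m u)) (pts m.+1).2 (pts m.+1).1|.

Definition grad_sup (Om : set pt) (ev : H -> pt -> R) (e : H) : \bar R :=
  ereal_sup [set (Num.sqrt (\sum_(l < n) (pd (ev e) l x) ^+ 2))%:E | x in Om].

Definition power_fn (ip : H -> H -> R) (Pi : nat -> H -> H)
    (dk : pt -> 'I_n -> H) (m : nat) (x : pt) (l : 'I_n) : R :=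
  hnorm ip (dk x l - Pi m (dk x l)).

End Defs.

From HB Require Import structures.
From mathcomp Require Import all_boot all_order all_algebra.
From mathcomp Require Import all_classical all_reals all_analysis.
From mathcomp Require Import ring lra.
Import Order.TTheory GRing.Theory Num.Theory.
Local Open Scope classical_set_scope.
Local Open Scope ring_scope.

(* Write e_i = u - s_i and g_i for the selected functional
   \partial_{l_{i+1}} k(., x_{i+1}), so that \partial_{l_{i+1}} e_i(x_{i+1}) = <e_i, g_i>.
   Since V_i is contained in V_{i+1}, which contains g_i, testing the best
   approximation property of s_{i+1} against s_i + c (g_i - Pi_i g_i) and
   optimising over c gives
     <e_i, g_i>^2 <= P_i(x_{i+1}, l_{i+1})^2 (|e_i|^2 - |e_{i+1}|^2),
   while the greedy choice makes |<e_i, g_i>| dominate every partial derivative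
   of e_i, so that |grad e_i|_oo <= sqrt n |<e_i, g_i>|.  Multiplying the first
   inequality over the window m+1 <= i <= 2m, AM-GM and telescoping bound the
   product of the decrements of |e_i|^2 by (|e_{m+1}|^2 / m)^m, and the smallest
   factor of the window obeys the claimed bound. *)

Lemma sqr_le_of_quadratic_bound (R : realFieldType) (A A' t q : R) :
  0 <= q -> (forall c, A' <= A - 2 * c * t + c ^+ 2 * q) ->
  t ^+ 2 <= q * (A - A').
Proof.
rewrite le_eqVlt => /predU1P[<- bound|q_gt0 bound].
  have [->|t_neq0] := eqVneq t 0; first by rewrite expr0n mul0r.
  have := bound ((A - A' + 1) / (2 * t)).
  have -> : 2 * ((A - A' + 1) / (2 * t)) * t = A - A' + 1.
    by field; rewrite t_neq0.
  lra.
have := bound (t / q); set s := t / q => bound_s.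
have tE : t = s * q by rewrite /s divfK ?gt_eqF.
rewrite tE in bound_s *.
have : 0 <= q * (A - A' - s ^+ 2 * q) by rewrite mulr_ge0 ?(ltW q_gt0) //; nra.
nra.
Qed.

Definition lin_closed {R : pzRingType} {H : lmodType R} (V : set H) : Prop :=
  forall a w1 w2, V w1 -> V w2 -> V (a *: w1 + w2).

Lemma lin_closedB {R : pzRingType} {H : lmodType R} {V : set H} (w1 w2 : H) :
  lin_closed V -> V w1 -> V w2 -> V (w1 - w2).
Proof. by move=> Vlin V1 V2; rewrite addrC -scaleN1r; apply: Vlin. Qed.

Section InnerProduct.
Context {R : realType} {H : lmodType R} {ip : H -> H -> R}.
Hypothesis ipC : forall f g, ip f g = ip g f.
Hypothesis ip_scaleDl : forall a f g h, ip (a *: f + g) h = a * ip f h + ip g h.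
Hypothesis ip_gt0 : forall f, f != 0 -> 0 < ip f f.

Lemma ip0l h : ip 0 h = 0.
Proof. by have := ip_scaleDl 1 0 0 h; rewrite scale1r addr0 mul1r; lra. Qed.

Lemma ipDl f g h : ip (f + g) h = ip f h + ip g h.
Proof. by rewrite -[f]scale1r ip_scaleDl mul1r scale1r. Qed.

Lemma ipZl a f h : ip (a *: f) h = a * ip f h.
Proof. by rewrite -[a *: f]addr0 ip_scaleDl ip0l addr0. Qed.

Lemma ipBl f g h : ip (f - g) h = ip f h - ip g h.
Proof. by rewrite ipDl -scaleN1r ipZl mulN1r. Qed.

Lemma ipDr f g h : ip h (f + g) = ip h f + ip h g.
Proof. by rewrite ipC ipDl !(ipC h). Qed.

Lemma ipZr a f h : ip h (a *: f) = a * ip h f.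
Proof. by rewrite ipC ipZl ipC. Qed.

Lemma ipBr f g h : ip h (f - g) = ip h f - ip h g.
Proof. by rewrite ipC ipBl !(ipC h). Qed.

Lemma ip_ge0 f : 0 <= ip f f.
Proof. by have [->|/ip_gt0/ltW//] := eqVneq f 0; rewrite ip0l. Qed.

Lemma ip_add_orth f g : ip f g = 0 -> ip (f + g) (f + g) = ip f f + ip g g.
Proof. by move=> fg0; rewrite ipDl !ipDr fg0 ipC fg0 add0r addr0. Qed.

Lemma ip_subZ f g c :
  ip (f - c *: g) (f - c *: g) = ip f f - 2 * c * ip f g + c ^+ 2 * ip g g.
Proof. by rewrite ipBl !ipBr !ipZl !ipZr (ipC g f); ring. Qed.

Lemma hnorm_sqr f : hnorm ip f ^+ 2 = ip f f.
Proof. by rewrite sqr_sqrtr // ip_ge0. Qed.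

Lemma orth_proj_best {V : set H} {P : H -> H} (u z : H) :
  lin_closed V -> is_orth_proj ip V P -> V z ->
  ip (u - P u) (u - P u) <= ip (u - z) (u - z).
Proof.
move=> V_lin PV Vz; have [VPu Pu_orth] := PV u.
have -> : u - z = (u - P u) + (P u - z) by rewrite addrA subrK.
rewrite [leRHS]ip_add_orth ?lerDl ?ip_ge0 //; apply: Pu_orth; exact: lin_closedB.
Qed.

Section NestedProjections.
Context {V V' : set H} {P P' : H -> H}.
Hypotheses (V'_lin : lin_closed V') (VV' : V `<=` V').
Hypotheses (PV : is_orth_proj ip V P) (PV' : is_orth_proj ip V' P').

Lemma orth_proj_err_antitone u :
  ip (u - P' u) (u - P' u) <= ip (u - P u) (u - P u).
Proof. exact: orth_proj_best u _ V'_lin PV' (VV' _ (proj1 (PV u))). Qed.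

Lemma orth_proj_err_drop u g : V' g ->
  ip (u - P u) g ^+ 2 <=
  ip (g - P g) (g - P g) * (ip (u - P u) (u - P u) - ip (u - P' u) (u - P' u)).
Proof.
move=> V'g; set e := u - P u; set w := g - P g.
have V'w : V' w by apply: lin_closedB (VV' _ (proj1 (PV g))).
have -> : ip e g = ip e w.
  by rewrite ipBr (proj2 (PV u) (P g)) ?subr0 //; case: (PV g).
apply: sqr_le_of_quadratic_bound (ip_ge0 w) _ => c.
rewrite -ip_subZ.
have -> : e - c *: w = u - (c *: w + P u) by rewrite opprD addrA addrAC.
exact: orth_proj_best u _ V'_lin PV' (V'_lin c w (P u) V'w (VV' _ (proj1 (PV u)))).
Qed.

End NestedProjections.
End InnerProduct.

Section SelectionSpan.
Context {R : realType} {n : nat} {H : lmodType R}.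
Context {dk : 'rV[R]_n -> 'I_n -> H} {pts : nat -> 'rV[R]_n * 'I_n}.

Lemma Vspace_lin_closed m : lin_closed (Vspace dk pts m).
Proof.
move=> a _ _ [c1 ->] [c2 ->]; exists (fun j => a * c1 j + c2 j).
rewrite scaler_sumr -big_split; apply: eq_bigr => j _.
by rewrite scalerDl scalerA.
Qed.

Lemma Vspace_subS m : Vspace dk pts m `<=` Vspace dk pts m.+1.
Proof.
move=> _ [c ->].
exists (fun j : 'I_m.+1 => if insub (val j) is Some j' then c j' else 0).
rewrite big_ord_recr /= insubF ?ltnn // scale0r addr0.
by apply: eq_bigr => j _; rewrite valK.
Qed.

Lemma Vspace_gen m : Vspace dk pts m.+1 (dk (pts m.+1).1 (pts m.+1).2).
Proof.
exists (fun j : 'I_m.+1 => if val j == m then 1 else 0).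
rewrite big_ord_recr /= eqxx scale1r big1 ?add0r // => j _.
by rewrite (ltn_eqF (ltn_ord j)) scale0r.
Qed.

End SelectionSpan.

Section DecayInWindows.
Context {R : realType}.

Lemma prod_decrements_le (b : nat -> R) (s m : nat) :
  (forall i, 0 <= b i) -> (forall i, b i.+1 <= b i) ->
  \prod_(s <= i < s + m) (b i - b i.+1) <= (b s / m%:R) ^+ m.
Proof.
move=> b_ge0 b_anti.
have decr_ge0 i : 0 <= b i - b i.+1 by rewrite subr_ge0.
have shift (F : nat -> R) op idx :
    \big[op/idx]_(s <= i < s + m) F i = \big[op/idx]_(i < m) F (i + s)%N.
  by rewrite -{1}[s]add0n big_addn addKn big_mkord.
rewrite shift.
have [+ _] := leif_AGM (A := predT)
  (E := fun i : 'I_m => b (i + s)%N - b (i + s).+1) (fun i _ => decr_ge0 _).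
rewrite cardT size_enum_ord => /le_trans; apply.
rewrite lerXn2r ?nnegrE ?divr_ge0 ?sumr_ge0 // ler_wpM2r ?invr_ge0 //.
rewrite -(shift (fun i => b i - b i.+1)) (telescope_sumr_eq (fun i => - b i)).
- by rewrite opprK addrC lerBlDr lerDl.
- by rewrite leq_addr.
- by move=> i _; rewrite opprK addrC.
Qed.

Lemma exists_le_of_prod_le (x : nat -> R) (B : R) (s t : nat) :
  (s < t)%N -> 0 <= B -> (forall i, 0 <= x i) ->
  \prod_(s <= i < t) x i <= B ^+ (t - s) ->
  exists2 j, (s <= j < t)%N & x j <= B.
Proof.
move=> lt_st B_ge0 x_ge0 prod_le; apply: contrapT => no_j.
suff : B ^+ (t - s) < \prod_(s <= i < t) x i by rewrite ltNge prod_le.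
rewrite -prodr_const_nat; apply: ltr_prod_nat => // i i_in.
by rewrite B_ge0 ltNge; apply/negP => xiB; apply: no_j; exists i.
Qed.

Variables (a p r : nat -> R).
Hypotheses (a_ge0 : forall i, 0 <= a i) (a_anti : forall i, a i.+1 <= a i).
Hypothesis p_ge0 : forall i, 0 <= p i.
Hypothesis r_sqr_le : forall i, r i ^+ 2 <= p i ^+ 2 * (a i ^+ 2 - a i.+1 ^+ 2).

Lemma exists_rate_in_window (s m : nat) : (0 < m)%N ->
  exists2 j, (s <= j < s + m)%N &
    r j <= (Num.sqrt m%:R)^-1 * a s * (\prod_(s <= i < s + m) p i) `^ m%:R^-1.
Proof.
move=> m_gt0; set P := \prod_(_ <= _ < _) _; set C := _ * _ * _.
have P_ge0 : 0 <= P by apply: prodr_ge0.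
have C_ge0 : 0 <= C by rewrite !mulr_ge0 ?invr_ge0 ?sqrtr_ge0 ?powR_ge0.
have root_expn : (P `^ m%:R^-1) ^+ m = P.
  rewrite -powR_mulrn ?powR_ge0 // -powRrM mulVf ?powRr1 //.
  by rewrite pnatr_eq0 -lt0n.
have C_sqr_expn :
    (C ^+ 2) ^+ m = (a s ^+ 2 / m%:R) ^+ m * \prod_(s <= i < s + m) p i ^+ 2.
  have C_sqr : C ^+ 2 = a s ^+ 2 / m%:R * (P `^ m%:R^-1) ^+ 2.
    by rewrite /C !exprMn exprVn sqr_sqrtr ?ler0n // [_^-1 * _]mulrC.
  by rewrite C_sqr exprMn -exprM mulnC exprM root_expn prodrXl.
have a_sqr_anti i : a i.+1 ^+ 2 <= a i ^+ 2 by rewrite lerXn2r ?nnegrE.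
have [j j_in rj] : exists2 j, (s <= j < s + m)%N & r j ^+ 2 <= C ^+ 2.
  apply: exists_le_of_prod_le => [||i|]; rewrite ?sqr_ge0 //.
    by rewrite -[X in (X < _)%N]addn0 ltn_add2l.
  rewrite addKn C_sqr_expn.
  apply: le_trans (_ : \prod_(s <= i < s + m) (p i ^+ 2 * (a i ^+ 2 - a i.+1 ^+ 2)) <= _).
    by apply: ler_prod => i _; rewrite sqr_ge0 r_sqr_le.
  rewrite big_split /= mulrC; apply: ler_wpM2r.
    by apply: prodr_ge0 => i _; exact: sqr_ge0.
  by apply: prod_decrements_le => // i; exact: sqr_ge0.
exists j => //; apply: le_trans (ler_norm _) _.
by rewrite -[C]ger0_norm // -!sqrtr_sqr ler_sqrt ?sqr_ge0.
Qed.

End DecayInWindows.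

Lemma grad_sup_le {R : realType} {n : nat} {Om : set 'rV[R]_n} {H : lmodType R}
    {ev : H -> 'rV[R]_n -> R} {e : H} {M : R} :
  0 <= M -> (forall x l, Om x -> `|pd (ev e) l x| <= M) ->
  (grad_sup Om ev e <= (Num.sqrt n%:R * M)%:E)%E.
Proof.
move=> M_ge0 pd_le; apply: ge_ereal_sup => _ [x Ox <-]; rewrite lee_fin.
rewrite -[M in _ * M]ger0_norm // -sqrtr_sqr -sqrtrM ?ler0n // ler_sqrt; last first.
  by rewrite mulr_ge0 ?ler0n ?sqr_ge0.
apply: le_trans (_ : \sum_(l < n) M ^+ 2 <= _); last first.
  by rewrite sumr_const card_ord mulr_natl.
apply: ler_sum => l _.
by rewrite -real_normK ?num_real // lerXn2r ?nnegrE ?pd_le.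
Qed.

Section FGreedy.
Context {R : realType} {n : nat} {Om : set 'rV[R]_n}.
Context {k : 'rV[R]_n -> 'rV[R]_n -> R} {H : lmodType R}.
Context {ev : H -> 'rV[R]_n -> R} {ip : H -> H -> R} {dk : 'rV[R]_n -> 'I_n -> H}.
Context {u : H} {Pi : nat -> H -> H} {pts : nat -> 'rV[R]_n * 'I_n}.
Hypotheses (H_RKHS : is_RKHS Om k ev ip) (dk_repr : deriv_reproducing Om k ev ip dk).
Hypothesis Pi_proj : forall m, is_orth_proj ip (Vspace dk pts m) (Pi m).
Hypothesis greedy : fgreedy Om ev u Pi pts.

Let ipC := ip_sym H_RKHS.
Let ip_scaleDl := ip_linl H_RKHS.
Let ip_gt0 := ip_pos H_RKHS.

Lemma greedy_err_antitone i : hnorm ip (u - Pi i.+1 u) <= hnorm ip (u - Pi i u).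
Proof.
rewrite ler_sqrt ?(ip_ge0 ip_scaleDl ip_gt0) //.
exact: (orth_proj_err_antitone ipC ip_scaleDl ip_gt0 (Vspace_lin_closed _)
  (Vspace_subS _) (Pi_proj i)).
Qed.

Lemma greedy_sel_deriv_sqr_le i :
  `|pd (ev (u - Pi i u)) (pts i.+1).2 (pts i.+1).1| ^+ 2 <=
  power_fn ip Pi dk i (pts i.+1).1 (pts i.+1).2 ^+ 2 *
  (hnorm ip (u - Pi i u) ^+ 2 - hnorm ip (u - Pi i.+1 u) ^+ 2).
Proof.
have [Ox _] := greedy i.
have [_ /(_ (u - Pi i u)) [_ ->]] := dk_repr _ (pts i.+1).2 Ox.
rewrite real_normK ?num_real // /power_fn !(hnorm_sqr ipC ip_scaleDl ip_gt0).
exact: (orth_proj_err_drop ipC ip_scaleDl ip_gt0 (Vspace_lin_closed _)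
  (Vspace_subS _) (Pi_proj i) (Pi_proj i.+1) u _ (Vspace_gen _)).
Qed.

End FGreedy.

Theorem theorem1 (R : realType) (n : nat) (Om : set 'rV[R]_n)
  (k : 'rV[R]_n -> 'rV[R]_n -> R) (H : lmodType R) (ev : H -> 'rV[R]_n -> R)
  (ip : H -> H -> R) (dk : 'rV[R]_n -> 'I_n -> H) (u : H)
  (Pi : nat -> H -> H) (pts : nat -> 'rV[R]_n * 'I_n) :
  open_set Om ->
  spd_kernel Om k ->
  C2_on Om k ->
  is_RKHS Om k ev ip ->
  deriv_reproducing Om k ev ip dk ->
  (forall m, is_orth_proj ip (Vspace dk pts m) (Pi m)) ->
  fgreedy Om ev u Pi pts ->
  forall m : nat, (1 <= m)%N ->
    (\big[Order.min/+oo%E]_(m.+1 <= i < m.*2.+1) grad_sup Om ev (u - Pi i u)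
     <= (Num.sqrt (n%:R) * (Num.sqrt (m%:R))^-1 * hnorm ip (u - Pi m.+1 u)
         * (\prod_(m.+1 <= i < m.*2.+1)
               power_fn ip Pi dk i (pts i.+1).1 (pts i.+1).2) `^ (m%:R^-1))%:E)%E.
Proof.
move=> _ _ _ H_RKHS dk_repr Pi_proj greedy m m_gt0.
have [j j_in rate] := exists_rate_in_window
  (fun i => hnorm ip (u - Pi i u))
  (fun i => power_fn ip Pi dk i (pts i.+1).1 (pts i.+1).2)
  (fun i => `|pd (ev (u - Pi i u)) (pts i.+1).2 (pts i.+1).1|)
  (fun=> sqrtr_ge0 _) (greedy_err_antitone H_RKHS Pi_proj) (fun=> sqrtr_ge0 _)
  (greedy_sel_deriv_sqr_le H_RKHS dk_repr Pi_proj greedy) m.+1 m m_gt0.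
have -> : m.*2.+1 = (m.+1 + m)%N by rewrite addSn addnn.
apply: (bigmin_inf_seq _ j) => //; first by rewrite mem_index_iota.
apply: le_trans (grad_sup_le (normr_ge0 _) (proj2 (greedy j))) _.
by rewrite lee_fin -!mulrA ler_wpM2l ?sqrtr_ge0 // mulrA.
Qed.
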